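(* If $\mathcal{X}=(X,\perp,R)$ is a monadic orthoframe, then $\mathcal{L}(\mathcal{X})=(\mathcal{L}(X,\perp),\exists_R)$ is a monadic ortholattice.
   Context: An orthoframe $(X,\perp)$ is a set with an irreflexive symmetric binary relation $\perp$; $A^\perp=\{x: a\perp x\ \forall a\in A\}$. $\mathcal{L}(X,\perp)=\{A\subseteq X: A=A^{\perp\perp}\}$ is a complete ortholattice with meets intersections, joins $(\bigcup A_i)^{\perp\perp}$, and orthocomplement $A\mapsto A^\perp$. $R[A]=\{y: x\,R\,y\text{ for some }x\in A\}$. A monadic orthoframe is $(X,\perp,R)$ with (M1) $\perp$ an orthogonality relation; (M2) $R$ reflexive and transitive; (M3) for each $x\in X$, $R[R[\{x\}]^\perp]\subseteq R[\{x\}]^\perp$. Define $\exists_RA=R[A]^{\perp\perp}$ for $A\in\mathcal{L}(X,\perp)$. A monadic ortholattice is an ortholattice with a unary $\exists$ satisfying (Q1) $\exists0=0$, (Q2) $p\le\exists p$, (Q3) $\exists(p\vee q)=\exists p\vee\exists q$, (Q4) $\exists\exists p=\exists p$, (Q5) $\exists(\exists p)^\perp=(\exists p)^\perp$. *)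

Set Implicit Arguments.

Section Defs.
Variable X : Type.

Definition set := X -> Prop.
Definition subset (A B : set) : Prop := forall x, A x -> B x.
Definition seteq (A B : set) : Prop := subset A B /\ subset B A.

Definition orthogonality (perp : X -> X -> Prop) : Prop :=
  (forall x, ~ perp x x) /\ (forall x y, perp x y -> perp y x).

Definition orth (perp : X -> X -> Prop) (A : set) : set :=
  fun x => forall a, A a -> perp a x.

(* A is in L(X, perp) iff A = A^{perp perp} *)
Definition closed (perp : X -> X -> Prop) (A : set) : Prop :=
  seteq A (orth perp (orth perp A)).

Definition emptyset : set := fun _ => False.
Definition fullset : set := fun _ => True.
Definition cap (A B : set) : set := fun x => A x /\ B x.
Definition join (perp : X -> X -> Prop) (A B : set) : set :=
  orth perp (orth perp (fun x => A x \/ B x)).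

Definition image (R : X -> X -> Prop) (A : set) : set :=
  fun y => exists x, A x /\ R x y.
Definition single (x : X) : set := fun y => y = x.

Definition monadic_orthoframe (perp R : X -> X -> Prop) : Prop :=
  orthogonality perp /\
  (forall x, R x x) /\
  (forall x y z, R x y -> R y z -> R x z) /\
  (forall x, subset (image R (orth perp (image R (single x))))
                    (orth perp (image R (single x)))).

Definition exR (perp R : X -> X -> Prop) (A : set) : set :=
  orth perp (orth perp (image R A)).

(* (L(X,perp), ex) is a monadic ortholattice: L is a (complete) ortholattice
   with the context's operations (meets = intersections, joins =
   closure of unions, complement = perp, 0 = empty, 1 = X), ex maps L into L,
   and (Q1)-(Q5) hold.  The lattice order is inclusion. *)
Definition is_ortholattice (perp : X -> X -> Prop) : Prop :=
  closed perp emptyset /\ closed perp fullset /\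
  (forall A B, closed perp A -> closed perp B -> closed perp (cap A B)) /\
  (forall A B, closed perp A -> closed perp B -> closed perp (join perp A B)) /\
  (forall A, closed perp A -> closed perp (orth perp A)) /\
  (forall A B C, closed perp C -> subset C A -> subset C B -> subset C (cap A B)) /\
  (forall A B, subset A (join perp A B) /\ subset B (join perp A B)) /\
  (forall A B C, closed perp C -> subset A C -> subset B C ->
     subset (join perp A B) C) /\
  (forall A, subset emptyset A /\ subset A fullset) /\
  (forall A, closed perp A -> seteq (orth perp (orth perp A)) A) /\
  (forall A B, closed perp A -> closed perp B -> subset A B ->
     subset (orth perp B) (orth perp A)) /\
  (forall A, closed perp A -> seteq (cap A (orth perp A)) emptyset) /\
  (forall A, closed perp A -> seteq (join perp A (orth perp A)) fullset).

Definition monadic_ortholattice (perp : X -> X -> Prop) (ex : set -> set) : Prop :=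
  is_ortholattice perp /\
  (forall A, closed perp A -> closed perp (ex A)) /\
  seteq (ex emptyset) emptyset /\
  (forall A, closed perp A -> subset A (ex A)) /\
  (forall A B, closed perp A -> closed perp B ->
              seteq (ex (join perp A B)) (join perp (ex A) (ex B))) /\
  (forall A, closed perp A -> seteq (ex (ex A)) (ex A)) /\
  (forall A, closed perp A ->
              seteq (ex (orth perp (ex A))) (orth perp (ex A))).
End Defs.

(* A |-> A^perp-perp is a closure operator, so the ortholattice laws are the
   usual facts about polarities.  The frame axiom (M3), extended from the cones
   R[{x}] to arbitrary R[A], says that every R[A]^perp is R-upward closed.
   Its key consequence is R[A^perp-perp] ⊆ R[A]^perp-perp, so exists_R ignores
   the closure of its argument.  Then (Q3) follows from R[-] preserving unions,
   (Q4) from R[R[A]] = R[A], and (Q5) from R-upward closure of R[A]^perp. *)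

Set Implicit Arguments.

Lemma subset_trans (X : Type) (A B C : set X) :
  subset A B -> subset B C -> subset A C.
Proof. intros AB BC x Ax. apply BC, AB, Ax. Qed.

Section Polarity.
Variables (X : Type) (perp : X -> X -> Prop).
Hypothesis perp_sym : forall x y, perp x y -> perp y x.
Hypothesis perp_irrefl : forall x, ~ perp x x.

Local Notation "A ^⊥" := (orth perp A) (at level 8, left associativity, format "A ^⊥").

Lemma orth_antimono (A B : set X) : subset A B -> subset B^⊥ A^⊥.
Proof. intros AB x Bx a Aa. apply Bx, AB, Aa. Qed.

Lemma subset_orth_orth (A : set X) : subset A A^⊥^⊥.
Proof. intros x Ax a Ha. apply perp_sym, Ha, Ax. Qed.

Lemma orth_orth_mono (A B : set X) : subset A B -> subset A^⊥^⊥ B^⊥^⊥.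
Proof. intros AB. apply orth_antimono, orth_antimono, AB. Qed.

Lemma closed_orth (A : set X) : closed perp A^⊥.
Proof. split; [apply subset_orth_orth | apply orth_antimono, subset_orth_orth]. Qed.

Lemma orth_orth_min (A B : set X) : closed perp B -> subset A B -> subset A^⊥^⊥ B.
Proof.
  intros [_ B_closed] AB. exact (subset_trans (orth_orth_mono AB) B_closed).
Qed.

Lemma closed_emptyset : closed perp (@emptyset X).
Proof.
  split; [intros x [] |].
  intros x Hx. apply (perp_irrefl (x := x)), Hx. intros a [].
Qed.

Lemma closed_fullset : closed perp (@fullset X).
Proof.
  split; [| intros x _; exact I].
  intros x _ a Ha. destruct (perp_irrefl (Ha a I)).
Qed.

Lemma closed_cap (A B : set X) :
  closed perp A -> closed perp B -> closed perp (cap A B).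
Proof.
  intros A_closed B_closed. split; [apply subset_orth_orth |].
  intros x Hx. split.
  - apply (orth_orth_min (A := cap A B) A_closed); [intros y [] | exact Hx]; auto.
  - apply (orth_orth_min (A := cap A B) B_closed); [intros y [] | exact Hx]; auto.
Qed.

Lemma cap_orth_empty (A : set X) : subset (cap A A^⊥) (@emptyset X).
Proof. intros x [Ax Hx]. apply (perp_irrefl (Hx x Ax)). Qed.

Lemma join_orth_full (A : set X) : subset (@fullset X) (join perp A A^⊥).
Proof.
  intros x _ c Hc. exfalso. apply (perp_irrefl (x := c)).
  apply Hc. right. intros a Aa. apply Hc. left. exact Aa.
Qed.

Lemma subset_join (A B : set X) :
  subset A (join perp A B) /\ subset B (join perp A B).
Proof. split; intros x Hx; apply subset_orth_orth; auto. Qed.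

Lemma join_min (A B C : set X) :
  closed perp C -> subset A C -> subset B C -> subset (join perp A B) C.
Proof. intros C_closed AC BC. apply orth_orth_min; [exact C_closed | intros x []; auto]. Qed.

Lemma ortholattice_closed_sets : is_ortholattice perp.
Proof.
  split; [exact closed_emptyset |].
  split; [exact closed_fullset |].
  split; [exact closed_cap |].
  split; [intros A B _ _; apply closed_orth |].
  split; [intros A _; apply closed_orth |].
  split; [intros A B C _ CA CB x Cx; split; auto |].
  split; [exact subset_join |].
  split; [exact join_min |].
  split; [intros A; split; [intros x [] | intros x _; exact I] |].
  split; [intros A [A_ext A_closed]; split; assumption |].
  split; [intros A B _ _; apply orth_antimono |].
  split; [intros A _; split; [apply cap_orth_empty | intros x []] |].
  intros A _. split; [intros x _; exact I | apply join_orth_full].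
Qed.

Section Monadic.
Variable R : X -> X -> Prop.
Hypothesis R_refl : forall x, R x x.
Hypothesis R_trans : forall x y z, R x y -> R y z -> R x z.
Hypothesis orth_cone_up_closed : forall x,
  subset (image R (image R (single x))^⊥) (image R (single x))^⊥.

Local Notation ex := (exR perp R).

Lemma image_mono (A B : set X) : subset A B -> subset (image R A) (image R B).
Proof. intros AB y [x [Ax Rxy]]. exists x. auto. Qed.

Lemma subset_image (A : set X) : subset A (image R A).
Proof. intros x Ax. exists x. auto. Qed.

Lemma image_image (A : set X) : subset (image R (image R A)) (image R A).
Proof. intros z [y [[x [Ax Rxy]] Ryz]]. exists x. eauto. Qed.

Lemma image_union (A B : set X) :
  subset (image R (fun x => A x \/ B x))
         (fun y => image R A y \/ image R B y).
Proof. intros y [x [[Ax | Bx] Rxy]]; [left | right]; exists x; auto. Qed.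

Lemma orth_image_up_closed (A : set X) :
  subset (image R (image R A)^⊥) (image R A)^⊥.
Proof.
  intros d Hd t [a [Aa Rat]].
  assert (cone_A : subset (image R (single a)) (image R A)).
  { apply image_mono. intros x ->. exact Aa. }
  apply (orth_cone_up_closed (x := a)).
  - revert d Hd. apply image_mono, orth_antimono, cone_A.
  - exists a. split; [reflexivity | exact Rat].
Qed.

Lemma image_orth_orth (A : set X) : subset (image R A^⊥^⊥) (image R A)^⊥^⊥.
Proof.
  intros b [a [Ha Rab]] c Hc.
  (* every R-successor of c lies in R[A]^perp ⊆ A^perp, hence is orthogonal to a *)
  assert (a_cone : (image R (single c))^⊥ a).
  { intros d [c' [-> Rcd]]. apply Ha.
    apply (orth_antimono (subset_image A)), orth_image_up_closed.
    exists c. split; assumption. }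
  apply (orth_cone_up_closed (x := c)).
  - exists a. split; assumption.
  - exists c. split; [reflexivity | apply R_refl].
Qed.

Lemma exR_mono (A B : set X) : subset A B -> subset (ex A) (ex B).
Proof. intros AB. apply orth_orth_mono, image_mono, AB. Qed.

Lemma exR_orth_orth (A : set X) : subset (ex A^⊥^⊥) (ex A).
Proof.
  apply orth_orth_min; [apply closed_orth | apply image_orth_orth].
Qed.

Lemma subset_exR (A : set X) : subset A (ex A).
Proof. intros x Ax. apply subset_orth_orth, subset_image, Ax. Qed.

Lemma exR_emptyset : seteq (ex (@emptyset X)) (@emptyset X).
Proof.
  split; [| intros x []].
  apply orth_orth_min; [apply closed_emptyset | intros y [x [[] _]]].
Qed.

Lemma exR_join (A B : set X) :
  seteq (ex (join perp A B)) (join perp (ex A) (ex B)).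
Proof.
  split.
  - apply (subset_trans (exR_orth_orth (A := fun x => A x \/ B x))), orth_orth_mono.
    intros y Hy. apply image_union in Hy. destruct Hy; [left | right];
      apply subset_orth_orth; assumption.
  - apply join_min; [apply closed_orth | |];
      apply exR_mono, subset_join.
Qed.

Lemma exR_exR (A : set X) : seteq (ex (ex A)) (ex A).
Proof.
  split; [| apply subset_exR].
  apply (subset_trans (exR_orth_orth (A := image R A))), orth_orth_mono, image_image.
Qed.

Lemma exR_orth_exR (A : set X) : seteq (ex (ex A)^⊥) (ex A)^⊥.
Proof.
  split; [| apply subset_exR].
  destruct (closed_orth (image R A)) as [to_triple from_triple].
  apply orth_orth_min; [apply closed_orth |].
  intros y Hy. apply to_triple, orth_image_up_closed.
  revert y Hy. apply image_mono, from_triple.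
Qed.

Lemma monadic_ortholattice_exR : monadic_ortholattice perp ex.
Proof.
  split; [exact ortholattice_closed_sets |].
  split; [intros A _; apply closed_orth |].
  split; [exact exR_emptyset |].
  split; [intros A _; apply subset_exR |].
  split; [intros A B _ _; apply exR_join |].
  split; [intros A _; apply exR_exR |].
  intros A _. apply exR_orth_exR.
Qed.

End Monadic.
End Polarity.

Theorem mainTheorem18 (X : Type) (perp R : X -> X -> Prop) :
  monadic_orthoframe perp R ->
  monadic_ortholattice perp (exR perp R).
Proof.
  intros [[perp_irrefl perp_sym] [R_refl [R_trans M3]]].
  exact (monadic_ortholattice_exR perp_sym perp_irrefl R_refl R_trans M3).
Qed.
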